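(* In the setting of the context, assume $\Pi^\rho_\nu\ne\emptyset$ for all $\nu\ge0$. Then the following are equivalent: (a) $\rho_1>0$; (b) $\mathcal{E}_\rho\ne\emptyset$. Moreover, if $\rho_1>0$, then $\mathcal{E}_\rho=\{(k\rho_1,k):k\ge0\}$.
   Context: Let $(\Omega,\mathcal{F},\mathbb{P})$ be a probability space and a market: riskless asset $S^0_0=1$, $S^0_1=1+r$, $r>-1$; risky assets $S^1,\dots,S^d$ with constants $S^i_0>0$ and real-valued $\mathcal{F}$-measurable $S^i_1$; returns $R^i:=(S^i_1-S^i_0)/S^i_0$. Standing assumptions: nonredundancy (if $\theta\in\mathbb{R}^{1+d}$ with $\sum_{i=0}^d\theta^iS^i_t=0$ a.s. for $t\in\{0,1\}$ then $\theta=0$), $R^i\in L^1$, $\mathbb{E}[R^i]\ne r$ for some $i$. Excess return of $\pi\in\mathbb{R}^d$: $X_\pi:=\pi\cdot(R-r\mathbf{1})$; $\Pi_\nu:=\{\pi:\mathbb{E}[X_\pi]=\nu\}$. $L$ is a Riesz space with $L^\infty\subset L\subset L^1$ containing all $X_\pi$; $\rho:L\to(-\infty,\infty]$ is monotone, cash-invariant and positively homogeneous. $\rho_\nu:=\inf\{\rho(X_\pi):\pi\in\Pi_\nu\}$; $\Pi^\rho_\nu$ is the set of $\pi\in\Pi_\nu$ with $\rho(X_\pi)<\infty$ and $\rho(X_\pi)\le\rho(X_{\pi'})$ for all $\pi'\in\Pi_\nu$. $\pi$ is strictly $\rho$-preferred over $\pi'$ if $\mathbb{E}[X_\pi]\ge\mathbb{E}[X_{\pi'}]$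 and $\rho(X_\pi)\le\rho(X_{\pi'})$ with one inequality strict; $\pi$ is $\rho$-efficient if $\mathbb{E}[X_\pi]\ge0$ and no portfolio is strictly $\rho$-preferred over it. The $\rho$-efficient frontier is $\mathcal{E}_\rho:=\{(\rho(X_\pi),\mathbb{E}[X_\pi]):\pi \text{ is } \rho\text{-efficient}\}$. *)

From HB Require Import structures.
From mathcomp Require Import all_boot all_order all_algebra.
From mathcomp Require Import all_classical all_reals all_analysis.
Set Implicit Arguments. Unset Strict Implicit. Unset Printing Implicit Defensive.
Import Order.TTheory GRing.Theory Num.Theory.
Local Open Scope classical_set_scope.
Local Open Scope ring_scope.

Definition ret (R : realType) (T : Type) (d : nat)
  (S0 : 'I_d -> R) (S1 : 'I_d -> T -> R) (i : 'I_d) : T -> R :=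
  fun w => (S1 i w - S0 i) / S0 i.

Definition Xpi (R : realType) (T : Type) (d : nat)
  (r : R) (Rt : 'I_d -> T -> R) (pi : 'I_d -> R) : T -> R :=
  fun w => \sum_(i < d) pi i * (Rt i w - r).

Definition expect (d0 : measure_display) (T : measurableType d0) (R : realType)
  (P : probability T R) (X : T -> R) : R :=
  fine (\int[P]_w (X w)%:E).

Section Portfolio.
Context (d0 : measure_display) (T : measurableType d0) (R : realType)
  (P : probability T R) (d : nat)
  (X : ('I_d -> R) -> T -> R)
  (rho : (T -> R) -> \bar R).

Definition Pi_nu (nu : R) : set ('I_d -> R) :=
  [set pi | expect P (X pi) = nu].

Definition rho_nu (nu : R) : \bar R :=
  ereal_inf [set rho (X pi) | pi in Pi_nu nu].

Definition Pi_rho_nu (nu : R) : set ('I_d -> R) :=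
  [set pi | Pi_nu nu pi /\ (rho (X pi) < +oo)%E /\
            forall pi', Pi_nu nu pi' -> (rho (X pi) <= rho (X pi'))%E].

Definition strictly_preferred (pi pi' : 'I_d -> R) : Prop :=
  (expect P (X pi) >= expect P (X pi') /\ (rho (X pi) <= rho (X pi'))%E) /\
  (expect P (X pi) > expect P (X pi') \/ (rho (X pi) < rho (X pi'))%E).

Definition rho_efficient (pi : 'I_d -> R) : Prop :=
  0 <= expect P (X pi) /\ ~ (exists pi', strictly_preferred pi' pi).

Definition efficient_frontier : set (\bar R * R) :=
  [set (rho (X pi), expect P (X pi)) | pi in rho_efficient].

End Portfolio.

Definition in_Linfty (d0 : measure_display) (T : measurableType d0) (R : realType)
  (P : probability T R) (f : T -> R) : Prop :=
  measurable_fun setT f /\ exists c : R, {ae P, forall w, `|f w| <= c}.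

Definition in_L1 (d0 : measure_display) (T : measurableType d0) (R : realType)
  (P : probability T R) (f : T -> R) : Prop :=
  measurable_fun setT f /\ P.-integrable setT (EFin \o f).

(* L is a Riesz space (vector sublattice) with L^infty ⊂ L ⊂ L^1,
   saturated w.r.t. P-a.s. equality (i.e. a set of equivalence classes) *)
Definition riesz_L (d0 : measure_display) (T : measurableType d0) (R : realType)
  (P : probability T R) (L : set (T -> R)) : Prop :=
  (forall f, in_Linfty P f -> L f) /\
  (forall f, L f -> in_L1 P f) /\
  (forall f g, L f -> L g -> L (f \+ g)) /\
  (forall (a : R) f, L f -> L (fun w => a * f w)) /\
  (forall f g, L f -> L g -> L (fun w => Num.max (f w) (g w))) /\
  (forall f g, L f -> measurable_fun setT g ->
         {ae P, forall w, f w = g w} -> L g).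

Definition risk_functional (d0 : measure_display) (T : measurableType d0)
  (R : realType) (P : probability T R) (L : set (T -> R))
  (rho : (T -> R) -> \bar R) : Prop :=
  [/\ (forall f, L f -> rho f != -oo%E),
      (forall f g, L f -> L g -> {ae P, forall w, f w <= g w} ->
         (rho g <= rho f)%E),
      (forall f (c : R), L f -> rho (fun w => f w + c) = (rho f - c%:E)%E)
    & (forall f (l : R), L f -> 0 < l -> rho (fun w => l * f w) = (l%:E * rho f)%E)].

From HB Require Import structures.
From mathcomp Require Import all_boot all_order all_algebra.
From mathcomp Require Import all_classical all_reals all_analysis.
From mathcomp Require Import lra.
Set Implicit Arguments. Unset Strict Implicit. Unset Printing Implicit Defensive.
Import Order.TTheory GRing.Theory Num.Theory.
Local Open Scope classical_set_scope.
Local Open Scope ring_scope.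

(* The expected excess return and the risk of [X_pi] are both positively
   homogeneous in [pi].  A minimizer at level 0 may be scaled by 2 and by 1/2
   within the level, so its risk [m] satisfies [m <= 2 m] and [m <= m / 2],
   i.e. [m = 0]; scaling a minimizer at level 1 then shows that a portfolio of
   mean [nu >= 0] has risk at least [nu rho_1], with equality attained.
   Efficient portfolios therefore lie on the half-line [rho = E rho_1], all of
   which is efficient when [rho_1 > 0]; when [rho_1 <= 0], moving up the line
   raises the mean without raising the risk, so nothing is efficient. *)

Lemma Xpi_scale (R : realType) (T : Type) (d : nat) (r : R)
    (Rt : 'I_d -> T -> R) (l : R) (pi : 'I_d -> R) :
  Xpi r Rt (l *: pi) = (fun w => l * Xpi r Rt pi w).
Proof.
by apply/funext => w; rewrite /Xpi mulr_sumr; apply: eq_bigr => i _; rewrite mulrA.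
Qed.

Lemma expectZ (d0 : measure_display) (T : measurableType d0) (R : realType)
    (P : probability T R) (f : T -> R) (l : R) :
  P.-integrable setT (EFin \o f) -> expect P (fun w => l * f w) = l * expect P f.
Proof.
move=> intf; rewrite /expect.
under eq_integral do rewrite EFinM.
by rewrite integralZl // fineM // (integrable_fin_num _ intf).
Qed.

Section HomogeneousFrontier.
Context (d0 : measure_display) (T : measurableType d0) (R : realType)
  (P : probability T R) (d : nat) (X : ('I_d -> R) -> T -> R)
  (rho : (T -> R) -> \bar R).

Local Notation E pi := (expect P (X pi)).
Local Notation rho_1 := (rho_nu P X rho 1).

Hypothesis expectXZ : forall l pi, E (l *: pi) = l * E pi.
Hypothesis rhoXZ : forall l pi, 0 < l -> rho (X (l *: pi)) = (l%:E * rho (X pi))%E.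
Hypothesis rhoX_neqNy : forall pi, rho (X pi) != -oo%E.

Lemma Pi_nuZ nu l pi : Pi_nu P X nu pi -> Pi_nu P X (l * nu) (l *: pi).
Proof. by rewrite /Pi_nu /= expectXZ => ->. Qed.

Lemma Pi_rho_nu_fin_num nu pi : Pi_rho_nu P X rho nu pi -> rho (X pi) \is a fin_num.
Proof. by move=> [_ [ltpiy _]]; rewrite fin_numE rhoX_neqNy lt_eqF. Qed.

Lemma rho_nu_min nu pi : Pi_rho_nu P X rho nu pi -> rho_nu P X rho nu = rho (X pi).
Proof.
move=> [pi_nu [_ minpi]]; apply/le_anti/andP; split.
  by apply: ereal_inf_lbound; exists pi.
by apply: le_ereal_inf_tmp => _ [pi' pi'_nu <-]; exact: minpi.
Qed.

Lemma Pi_rho_nu0_rho0 pi : Pi_rho_nu P X rho 0 pi -> rho (X pi) = 0%:E.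
Proof.
move=> pimin; have [pi_nu [_ minpi]] := pimin.
have pi_le_scaled l : 0 < l -> (rho (X pi) <= l%:E * rho (X pi))%E.
  by move=> l_gt0; rewrite -rhoXZ //; apply: minpi; rewrite -(mulr0 l); exact: Pi_nuZ.
have two_gt0 : (0 : R) < 2 := ltr0Sn R 1.
have half_gt0 : (0 : R) < 2^-1 by rewrite invr_gt0.
have := pi_le_scaled _ two_gt0; have := pi_le_scaled _ half_gt0.
rewrite -(fineK (Pi_rho_nu_fin_num pimin)) -!EFinM !lee_fin => le_half le_double.
by congr EFin; lra.
Qed.

Variables pi0 pi1 : 'I_d -> R.
Hypothesis pi0_min : Pi_rho_nu P X rho 0 pi0.
Hypothesis pi1_min : Pi_rho_nu P X rho 1 pi1.

Let c := fine rho_1.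

Lemma rho_nu1E : rho_1 = c%:E.
Proof. by rewrite /c (rho_nu_min pi1_min) fineK // (Pi_rho_nu_fin_num pi1_min). Qed.

Lemma rho_ge_frontier pi : 0 <= E pi -> ((E pi * c)%:E <= rho (X pi))%E.
Proof.
set nu := E pi; rewrite le_eqVlt => /predU1P [nu0 | nu_gt0].
  rewrite -nu0 mul0r -(Pi_rho_nu0_rho0 pi0_min); apply: pi0_min.2.2.
  exact: esym nu0.
have -> : pi = nu *: (nu^-1 *: pi) by rewrite scalerA mulfV ?gt_eqF // scale1r.
rewrite rhoXZ // EFinM lee_pmul2l // -rho_nu1E.
apply: ereal_inf_lbound; exists (nu^-1 *: pi) => //.
by rewrite /Pi_nu /= expectXZ mulVf ?gt_eqF.
Qed.

Lemma frontier_attained nu : 0 <= nu ->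
  exists2 pi, E pi = nu & rho (X pi) = (nu * c)%:E.
Proof.
rewrite le_eqVlt => /predU1P [<- | nu_gt0].
  by exists pi0; [exact: pi0_min.1 | rewrite mul0r (Pi_rho_nu0_rho0 pi0_min)].
exists (nu *: pi1); first by rewrite expectXZ pi1_min.1 mulr1.
by rewrite rhoXZ // -(rho_nu_min pi1_min) rho_nu1E.
Qed.

Lemma efficient_rhoE pi : rho_efficient P X rho pi -> rho (X pi) = (E pi * c)%:E.
Proof.
move=> [Epi_ge0 not_dominated]; have [pi' Epi' rhopi'] := frontier_attained Epi_ge0.
apply/eqP; rewrite eq_le rho_ge_frontier // andbT leNgt; apply/negP => lt_rho.
apply: not_dominated; exists pi'; rewrite /strictly_preferred Epi' rhopi'.
by split; [split; [exact: lexx | exact: ltW] | right].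
Qed.

Lemma frontier_efficient pi : 0 < c -> 0 <= E pi ->
  rho (X pi) = (E pi * c)%:E -> rho_efficient P X rho pi.
Proof.
move=> c_gt0 Epi_ge0 rhopi; split => // -[pi' [[Epi_le rho_le] strict]].
have ge_frontier := rho_ge_frontier (le_trans Epi_ge0 Epi_le).
rewrite rhopi in rho_le strict; case: strict => [Epi_lt | rho_lt].
  by have := le_trans ge_frontier rho_le; rewrite lee_fin ler_pM2r // leNgt Epi_lt.
by have := le_lt_trans ge_frontier rho_lt; rewrite lte_fin ltr_pM2r // ltNge Epi_le.
Qed.

Lemma efficient_rho_nu1_gt0 pi : rho_efficient P X rho pi -> 0 < c.
Proof.
move=> pi_eff; rewrite ltNge; apply/negP => c_le0.
have [Epi_ge0 not_dominated] := pi_eff.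
have [pi' Epi' rhopi'] := frontier_attained (addr_ge0 Epi_ge0 ler01).
apply: not_dominated; exists pi'; rewrite /strictly_preferred Epi' rhopi'.
rewrite (efficient_rhoE pi_eff) !lee_fin lerDl ltrDl mulrDl mul1r gerDl.
by split; [split | left].
Qed.

Lemma efficient_frontier_neq0 :
  (0 < rho_1)%E <-> efficient_frontier P X rho !=set0.
Proof.
rewrite rho_nu1E lte_fin; split => [c_gt0 | [_ [pi pi_eff _]]].
  have [pi Epi rhopi] := frontier_attained (lexx 0).
  exists (rho (X pi), E pi); exists pi => //.
  by apply: frontier_efficient; rewrite ?Epi.
exact: efficient_rho_nu1_gt0 pi_eff.
Qed.

Lemma efficient_frontierE : (0 < rho_1)%E ->
  efficient_frontier P X rho =
    [set p | exists2 k : R, 0 <= k & p = ((k%:E * rho_1)%E, k)].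
Proof.
rewrite rho_nu1E lte_fin => c_gt0; apply/seteqP; split.
  move=> _ [pi pi_eff <-]; exists (E pi); first exact: pi_eff.1.
  by rewrite (efficient_rhoE pi_eff) EFinM.
move=> _ [k k_ge0 ->]; have [pi Epi rhopi] := frontier_attained k_ge0.
exists pi; last by rewrite rhopi Epi EFinM.
by apply: frontier_efficient; rewrite ?Epi.
Qed.

End HomogeneousFrontier.

Theorem proposition3p15
  (d0 : measure_display) (T : measurableType d0) (R : realType)
  (P : probability T R) (d : nat)
  (r : R) (S0 : 'I_d -> R) (S1 : 'I_d -> T -> R)
  (L : set (T -> R)) (rho : (T -> R) -> \bar R) :
  -1 < r ->
  (forall i, 0 < S0 i) ->
  (forall i, measurable_fun setT (S1 i)) ->
  (* nonredundancy *)
  (forall (th0 : R) (th : 'I_d -> R),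
     th0 + \sum_(i < d) th i * S0 i = 0 ->
     {ae P, forall w, th0 * (1 + r) + \sum_(i < d) th i * S1 i w = 0} ->
     th0 = 0 /\ forall i, th i = 0) ->
  (forall i, P.-integrable setT (EFin \o ret S0 S1 i)) ->
  (exists i, expect P (ret S0 S1 i) != r) ->
  riesz_L P L ->
  (forall pi, L (Xpi r (ret S0 S1) pi)) ->
  risk_functional P L rho ->
  (forall nu, 0 <= nu -> Pi_rho_nu P (Xpi r (ret S0 S1)) rho nu !=set0) ->
  ((0 < rho_nu P (Xpi r (ret S0 S1)) rho 1)%E <->
     efficient_frontier P (Xpi r (ret S0 S1)) rho !=set0) /\
  ((0 < rho_nu P (Xpi r (ret S0 S1)) rho 1)%E ->
     efficient_frontier P (Xpi r (ret S0 S1)) rho =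
       [set p | exists2 k : R, 0 <= k &
          p = ((k%:E * rho_nu P (Xpi r (ret S0 S1)) rho 1)%E, k)]).
Proof.
move=> _ _ _ _ _ _ [_ [L_L1 _]] XL [rho_neqNy _ _ rho_hom] minimizers_exist.
set X := Xpi r (ret S0 S1).
have expectXZ l pi : expect P (X (l *: pi)) = l * expect P (X pi).
  by rewrite /X Xpi_scale expectZ //; case: (L_L1 _ (XL pi)).
have rhoXZ l pi : 0 < l -> rho (X (l *: pi)) = (l%:E * rho (X pi))%E.
  by move=> l_gt0; rewrite /X Xpi_scale rho_hom.
have rhoX_neqNy pi : rho (X pi) != -oo%E by exact: rho_neqNy.
have [pi0 pi0_min] := minimizers_exist 0 (lexx 0).
have [pi1 pi1_min] := minimizers_exist 1 ler01.
split; first exact: (efficient_frontier_neq0 expectXZ rhoXZ rhoX_neqNy pi0_min pi1_min).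
exact: (efficient_frontierE expectXZ rhoXZ rhoX_neqNy pi0_min pi1_min).
Qed.
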